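(* Let $\rho,\varepsilon,\nu,\omega,\mu:[0,1]\to\mathbb{R}$ be smooth functions with $\rho,\omega>0$, $\nu\ge 0$, $\mu\ge 0$, $\varepsilon(s)>0$ for all $s\in[0,1]$, and $\mu(1)=\mu_s(1)=0$. Let $u\in C^2([0,1])$ with $u(s)\in[-1,1]$ for all $s$. Consider the stationary problem, in the unknowns $q:[0,1]\to\mathbb{R}^2$ and $\sigma:[0,1]\to\mathbb{R}$, $$ \begin{cases} \left(\sigma q_s-H q_{ss}^\perp\right)_s -\left(G q_{ss}+H q_{s}^\perp\right)_{ss}=0 & \text{in }(0,1),\\ |q_s|^2=1 & \text{in }(0,1),\\ q(0)=0,\quad q_s(0)=-e_2,\\ q_{ss}(1)=0,\quad q_{sss}(1)=0,\quad \sigma(1)=0, \end{cases} $$ where $G(s)=\varepsilon(s)+\nu(s)\big(|q_{ss}(s)|^2-\omega^2(s)\big)_+$ and $H(s)=\mu(s)\big(\omega(s)u(s)-q_s(s)\times q_{ss}(s)\big)$. Then this problem admits a unique solution $(q,\sigma)\in C^4([0,1])\times C^1([0,1])$, given for $s\in[0,1]$ by $$ q(s)=\int_0^s\big(\sin(\theta(\xi)),-\cos(\theta(\xi))\big)\,d\xi,\qquad \sigma(s)=\varepsilon(s)\big(\bar\omega(s)u(s)\big)^2, $$ where $$ \theta(\xi)=\int_0^\xi\bar\omega(z)u(z)\,dz,\qquad \bar\omega(s)=\frac{\mu(s)\omega(s)}{\mu(s)+\varepsilon(s)}. $$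
   Context: Notation: $e_2=(0,1)$. For $v\in\mathbb{R}^2$, $v^\perp=\begin{pmatrix}0&1\\-1&0\end{pmatrix}v$. For $v,w\in\mathbb{R}^2$, $v\times w:=v\cdot w^\perp$ (a scalar). $(x)_+=\max\{x,0\}$. Subscripts $s$ denote derivatives with respect to $s$. *)

From Stdlib Require Import Reals Lra ClassicalEpsilon.
Open Scope R_scope.

Definition has_deriv01 (f : R -> R) (x l : R) : Prop :=
  forall e, 0 < e -> exists d, 0 < d /\
    forall h, h <> 0 -> Rabs h < d -> 0 <= x + h <= 1 ->
      Rabs ((f (x + h) - f x) / h - l) < e.

Definition cont01 (f : R -> R) (x : R) : Prop :=
  forall e, 0 < e -> exists d, 0 < d /\
    forall y, 0 <= y <= 1 -> Rabs (y - x) < d -> Rabs (f y - f x) < e.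

Definition deriv_chain (k : nat) (f : R -> R) (D : nat -> R -> R) : Prop :=
  (forall x, 0 <= x <= 1 -> D O x = f x) /\
  (forall (j : nat) x, (j < k)%nat -> 0 <= x <= 1 ->
      has_deriv01 (D j) x (D (S j) x)) /\
  (forall x, 0 <= x <= 1 -> cont01 (D k) x).

Definition Ck (k : nat) (f : R -> R) : Prop := exists D, deriv_chain k f D.

Definition smooth01 (f : R -> R) : Prop := forall k, Ck k f.

(* Riemann integral as a total function (value 0 if not integrable). *)
Definition is_RInt (f : R -> R) (a b I : R) : Prop :=
  exists pr : Riemann_integrable f a b, RiemannInt pr = I.

Definition RInt (f : R -> R) (a b : R) : R :=
  match excluded_middle_informative (exists I, is_RInt f a b I) with
  | left H => proj1_sig (constructive_indefinite_description _ H)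
  | right _ => 0
  end.

(* (q1,q2) = q, D j = j-th derivative of q1, E j = of q2.
   v^perp = (v2, -v1);  v x w = v . w^perp = v1 w2 - v2 w1. *)
Definition is_solution (eps nu omega mu u q1 q2 sigma : R -> R) : Prop :=
  exists D E : nat -> R -> R,
    deriv_chain 4 q1 D /\ deriv_chain 4 q2 E /\ Ck 1 sigma /\
    (forall s, 0 < s < 1 -> D 1%nat s ^ 2 + E 1%nat s ^ 2 = 1) /\
    q1 0 = 0 /\ q2 0 = 0 /\ D 1%nat 0 = 0 /\ E 1%nat 0 = -1 /\
    D 2%nat 1 = 0 /\ E 2%nat 1 = 0 /\ D 3%nat 1 = 0 /\ E 3%nat 1 = 0 /\
    sigma 1 = 0 /\
    let G := fun s => eps s + nu s *
                 Rmax (D 2%nat s ^ 2 + E 2%nat s ^ 2 - omega s ^ 2) 0 in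
    let H := fun s => mu s *
                 (omega s * u s - (D 1%nat s * E 2%nat s - E 1%nat s * D 2%nat s)) in
    (* A = sigma q_s - H q_ss^perp,  B = G q_ss + H q_s^perp *)
    let A1 := fun s => sigma s * D 1%nat s - H s * E 2%nat s in
    let A2 := fun s => sigma s * E 1%nat s + H s * D 2%nat s in
    let B1 := fun s => G s * D 2%nat s + H s * E 1%nat s in
    let B2 := fun s => G s * E 2%nat s - H s * D 1%nat s in
    exists dA1 dA2 dB1 dB2 ddB1 ddB2 : R -> R,
      forall s, 0 < s < 1 ->
        derivable_pt_lim A1 s (dA1 s) /\ derivable_pt_lim A2 s (dA2 s) /\
        derivable_pt_lim B1 s (dB1 s) /\ derivable_pt_lim B2 s (dB2 s) /\
        derivable_pt_lim dB1 s (ddB1 s) /\ derivable_pt_lim dB2 s (ddB2 s) /\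
        dA1 s - ddB1 s = 0 /\ dA2 s - ddB2 s = 0.

(* Write the tangent as q_s = (sin theta, -cos theta), so that q_ss = kappa (cos theta, sin theta)
   with kappa = theta'. Existence: for kappa = wbar u one has |q_ss| = |kappa| <= omega, hence G = eps
   and H = eps kappa, and then A = sigma q_s - H q_ss^perp and B = G q_ss + H q_s^perp vanish
   identically. Uniqueness: the equation says that A - B_s is constant. At s = 1 the boundary
   conditions give A -> 0 and B = o(1 - s), which by the mean value theorem forces the constant to
   vanish. Then N = q_s x B has derivative q_ss x B + q_s x A = 0 and N(1) = 0, so
   G kappa = H, hence B = 0, A = 0 and sigma = H kappa. The scalar equation
   (eps + nu (kappa^2 - omega^2)_+) kappa = mu (omega u - kappa) has the single root kappa = wbar u,
   and integrating the tangent angle identifies q and sigma. *)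

From Pilot Require Import Defs.
From Stdlib Require Import Reals Lra Lia Psatz.
From Coquelicot Require Import Coquelicot.
Open Scope R_scope.

(** * Limits relative to [0,1] *)

Definition I01 (x : R) : Prop := 0 <= x <= 1.

(* Filters at [x] relative to [0,1]: [near01 x] for continuity, [punct01 x] for difference quotients,
   and the finer [inner01 x], which is proper at every point of [0,1]. *)
Definition near01 (x : R) := within I01 (locally x).
Definition punct01 (x : R) := within (fun y => y <> x /\ I01 y) (locally x).
Definition inner01 (x : R) := within (fun y => y <> x /\ 0 < y < 1) (locally x).

Lemma within_le (D D' : R -> Prop) (x : R) :
  (forall y, D y -> D' y) -> filter_le (within D (locally x)) (within D' (locally x)).
Proof. intros HD P; unfold within; apply filter_imp; intros y H Dy; apply H, HD, Dy. Qed.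

Lemma inner01_le_punct01 x : filter_le (inner01 x) (punct01 x).
Proof. apply within_le; unfold I01; intros y [? ?]; split; [auto|lra]. Qed.

Lemma punct01_le_near01 x : filter_le (punct01 x) (near01 x).
Proof. apply within_le; tauto. Qed.

Lemma inner01_proper x : I01 x -> ProperFilter (inner01 x).
Proof.
  intros Ix; split; [|apply within_filter, locally_filter].
  intros P [d Hd].
  set (h := Rmin (d / 2) (1 / 4)).
  assert (0 < h /\ h <= d / 2 /\ h <= 1 / 4) as [? [? ?]].
  { pose proof (cond_pos d); unfold h; repeat split;
      [apply Rmin_pos; lra | apply Rmin_l | apply Rmin_r]. }
  pose proof (cond_pos d); unfold I01 in Ix.
  destruct (Rle_dec x (1 / 2)); [exists (x + h) | exists (x - h)]; apply Hd;
    try (split; lra);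
    change (Rabs (x + h - x) < d) || change (Rabs (x - h - x) < d);
    [rewrite Rabs_pos_eq | rewrite Rabs_left]; lra.
Qed.

Section RealLimits.
Context {T : Type} {F : (T -> Prop) -> Prop} {FF : Filter F}.

Lemma filterlim_Rplus (f g : T -> R) a b : filterlim f F (locally a) -> filterlim g F (locally b) ->
  filterlim (fun x => f x + g x) F (locally (a + b)).
Proof. intros Hf Hg; exact (filterlim_comp_2 _ _ _ Hf Hg (filterlim_plus a b)). Qed.

Lemma filterlim_Rmult (f g : T -> R) a b : filterlim f F (locally a) -> filterlim g F (locally b) ->
  filterlim (fun x => f x * g x) F (locally (a * b)).
Proof. intros Hf Hg; exact (filterlim_comp_2 _ _ _ Hf Hg (filterlim_mult a b)). Qed.

Lemma filterlim_Ropp (f : T -> R) a :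
  filterlim f F (locally a) -> filterlim (fun x => - f x) F (locally (- a)).
Proof. intros Hf; exact (filterlim_comp _ _ _ _ _ _ _ _ Hf (filterlim_opp (V := R_NormedModule) a)). Qed.

Lemma filterlim_continuity_pt (f : T -> R) g a : filterlim f F (locally a) -> continuity_pt g a ->
  filterlim (fun x => g (f x)) F (locally (g a)).
Proof. intros Hf Hg; eapply filterlim_comp; [exact Hf | apply continuity_pt_filterlim, Hg]. Qed.

End RealLimits.

Lemma within_locally_R_iff (D P : R -> Prop) x :
  within D (locally x) P <-> exists d, 0 < d /\ forall y, D y -> Rabs (y - x) < d -> P y.
Proof.
  split.
  - intros [d Hd]; exists d; split; [apply cond_pos|]; intros y Dy Hy; apply Hd; auto.
  - intros [d [Hd K]]; exists (mkposreal d Hd); intros y Hy Dy; apply K; auto.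
Qed.

Lemma filterlim_within_R_iff (D : R -> Prop) x (f : R -> R) l :
  filterlim f (within D (locally x)) (locally l) <->
  forall e, 0 < e -> exists d, 0 < d /\ forall y, D y -> Rabs (y - x) < d -> Rabs (f y - l) < e.
Proof.
  rewrite filterlim_locally; split.
  - intros H e He; apply within_locally_R_iff, (H (mkposreal e He)).
  - intros H e; apply within_locally_R_iff, H, cond_pos.
Qed.

Lemma cont01_filterlim f x : cont01 f x <-> filterlim f (near01 x) (locally (f x)).
Proof. unfold near01; rewrite filterlim_within_R_iff; reflexivity. Qed.

Lemma has_deriv01_filterlim f x l :
  has_deriv01 f x l <-> filterlim (fun y => (f y - f x) / (y - x)) (punct01 x) (locally l).
Proof.
  unfold punct01; rewrite filterlim_within_R_iff; unfold has_deriv01.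
  split; intros H e He; destruct (H e He) as [d [Hd K]]; exists d; split; auto.
  - intros y [Ny Iy] Hy; replace y with (x + (y - x)) at 1 by ring; apply K; auto; [lra | ].
    replace (x + (y - x)) with y by ring; exact Iy.
  - intros h Nh Hh Ih; replace h with (x + h - x) at 2 by ring; apply K;
      [split; [lra | exact Ih] | now replace (x + h - x) with h by ring].
Qed.

Lemma filterlim_id_within (D : R -> Prop) x : filterlim (fun y => y) (within D (locally x)) (locally x).
Proof. apply filterlim_within_R_iff; intros e He; exists e; split; auto. Qed.

Lemma filterlim_within_unpunct (D : R -> Prop) x (f : R -> R) :
  filterlim f (within (fun y => y <> x /\ D y) (locally x)) (locally (f x)) ->
  filterlim f (within D (locally x)) (locally (f x)).
Proof.
  rewrite !filterlim_within_R_iff; intros H e He; destruct (H e He) as [d [Hd K]].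
  exists d; split; auto; intros y Dy Hy.
  destruct (Req_dec y x) as [->|Ny]; [rewrite Rminus_diag, Rabs_R0; exact He | auto].
Qed.

Lemma filterlim_inner01_unique x (f : R -> R) a b : I01 x ->
  filterlim f (inner01 x) (locally a) -> filterlim f (inner01 x) (locally b) -> a = b.
Proof.
  intros Ix; exact (filterlim_locally_unique (V := R_NormedModule)
                      (FF := Proper_StrongProper _ (inner01_proper x Ix)) f a b).
Qed.

Lemma cont01_inner01 f x : cont01 f x -> filterlim f (inner01 x) (locally (f x)).
Proof.
  rewrite cont01_filterlim; apply filterlim_filter_le_1.
  intros P HP; apply inner01_le_punct01, punct01_le_near01, HP.
Qed.

Lemma has_deriv01_inner01 f x l : has_deriv01 f x l ->
  filterlim (fun y => (f y - f x) / (y - x)) (inner01 x) (locally l).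
Proof. rewrite has_deriv01_filterlim; apply filterlim_filter_le_1, inner01_le_punct01. Qed.

(** * One-sided calculus on [0,1] *)

Lemma has_deriv01_unique f x l l' : I01 x -> has_deriv01 f x l -> has_deriv01 f x l' -> l = l'.
Proof.
  intros Ix H H'; apply (filterlim_inner01_unique x (fun y => (f y - f x) / (y - x)) _ _ Ix);
    apply has_deriv01_inner01; assumption.
Qed.

Lemma has_deriv01_cont f x l : has_deriv01 f x l -> cont01 f x.
Proof.
  rewrite has_deriv01_filterlim, cont01_filterlim; intros H; apply filterlim_within_unpunct.
  apply (filterlim_within_ext (fun y => y <> x /\ I01 y)
           (fun y => f x + (f y - f x) / (y - x) * (y - x))).
  { intros y [Ny _]; field; lra. }
  replace (locally (f x)) with (locally (f x + l * (x - x))) by (f_equal; ring).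
  apply filterlim_Rplus; [apply filterlim_const | apply filterlim_Rmult; [exact H |]].
  apply filterlim_Rplus; [apply filterlim_id_within | apply filterlim_const].
Qed.

Lemma has_deriv01_ext f g x l : I01 x -> (forall y, I01 y -> f y = g y) ->
  has_deriv01 f x l -> has_deriv01 g x l.
Proof.
  rewrite !has_deriv01_filterlim; intros Ix E; apply filterlim_within_ext.
  intros y [_ Iy]; rewrite !E; auto.
Qed.

Lemma has_deriv01_eq f x l l' : l = l' -> has_deriv01 f x l -> has_deriv01 f x l'.
Proof. intros ->; auto. Qed.

Lemma has_deriv01_plus f g x a b : has_deriv01 f x a -> has_deriv01 g x b ->
  has_deriv01 (fun y => f y + g y) x (a + b).
Proof.
  rewrite !has_deriv01_filterlim; intros Hf Hg.
  eapply filterlim_within_ext; [|exact (filterlim_Rplus _ _ _ _ Hf Hg)].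
  intros y [Ny _]; simpl; field; lra.
Qed.

Lemma has_deriv01_opp f x a : has_deriv01 f x a -> has_deriv01 (fun y => - f y) x (- a).
Proof.
  rewrite !has_deriv01_filterlim; intros Hf.
  eapply filterlim_within_ext; [|exact (filterlim_Ropp _ _ Hf)].
  intros y [Ny _]; simpl; field; lra.
Qed.

Lemma has_deriv01_minus f g x a b : has_deriv01 f x a -> has_deriv01 g x b ->
  has_deriv01 (fun y => f y - g y) x (a - b).
Proof. intros; apply has_deriv01_plus, has_deriv01_opp; auto. Qed.

Lemma has_deriv01_mult f g x a b : has_deriv01 f x a -> has_deriv01 g x b ->
  has_deriv01 (fun y => f y * g y) x (a * g x + f x * b).
Proof.
  intros Hf Hg; pose proof (has_deriv01_cont _ _ _ Hg) as Cg.
  rewrite cont01_filterlim in Cg; rewrite has_deriv01_filterlim in *.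
  apply (filterlim_within_ext _
           (fun y => (f y - f x) / (y - x) * g y + f x * ((g y - g x) / (y - x)))).
  { intros y [Ny _]; field; lra. }
  apply filterlim_Rplus; apply filterlim_Rmult; auto; [|apply filterlim_const].
  eapply filterlim_filter_le_1; [apply punct01_le_near01 | exact Cg].
Qed.

(* Chain rule through the continuous extension [phi] of the difference quotient of [g] at [f x]. *)
Lemma has_deriv01_comp f g x a g' : has_deriv01 f x a -> derivable_pt_lim g (f x) g' ->
  has_deriv01 (fun y => g (f y)) x (g' * a).
Proof.
  intros Hf Hg; pose proof (has_deriv01_cont _ _ _ Hf) as Cf.
  rewrite cont01_filterlim in Cf; rewrite has_deriv01_filterlim in *.
  set (phi z := if Req_EM_T z (f x) then g' else (g z - g (f x)) / (z - f x)).
  assert (Cphi : continuity_pt phi (f x)).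
  { intros e He; destruct (Hg e He) as [d Hd]; exists d; split; [apply cond_pos|].
    intros z [[_ Nz] Hz]; simpl in Hz; unfold R_dist in Hz; unfold phi, R_dist.
    destruct (Req_EM_T (f x) (f x)) as [_|C]; [|congruence].
    destruct (Req_EM_T z (f x)) as [E|_]; [congruence|].
    replace z with (f x + (z - f x)) at 1 by ring; apply Hd; auto; lra. }
  apply (filterlim_within_ext _ (fun y => phi (f y) * ((f y - f x) / (y - x)))).
  { intros y [Ny _]; unfold phi; destruct (Req_EM_T (f y) (f x)) as [E|E].
    - rewrite E, !Rminus_diag; field; lra.
    - field; lra. }
  replace g' with (phi (f x)) by (unfold phi; destruct Req_EM_T; congruence).
  apply filterlim_Rmult; auto; apply filterlim_continuity_pt; auto.
  eapply filterlim_filter_le_1; [apply punct01_le_near01 | exact Cf].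
Qed.

Lemma derivable_has_deriv01 f x l : derivable_pt_lim f x l -> has_deriv01 f x l.
Proof.
  intros H e He; destruct (H e He) as [d Hd]; exists d; split; [apply cond_pos|].
  intros h Nh Hh _; apply Hd; auto.
Qed.

Lemma has_deriv01_derivable f x l : 0 < x < 1 -> has_deriv01 f x l -> derivable_pt_lim f x l.
Proof.
  intros Ix H e He; destruct (H e He) as [d [Hd K]].
  assert (Hm : 0 < Rmin d (Rmin x (1 - x))) by (repeat apply Rmin_pos; lra).
  exists (mkposreal _ Hm); intros h Nh Hh; simpl in Hh.
  pose proof (Rmin_l d (Rmin x (1 - x))); pose proof (Rmin_r d (Rmin x (1 - x))).
  pose proof (Rmin_l x (1 - x)); pose proof (Rmin_r x (1 - x)).
  apply Rabs_def2 in Hh; apply K; auto; [apply Rabs_def1 | split]; lra.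
Qed.

Lemma derivable_pt_lim_open01_const f c x : 0 < x < 1 -> (forall y, 0 < y < 1 -> f y = c) ->
  derivable_pt_lim f x 0.
Proof.
  intros Ix E; apply is_derive_Reals, (is_derive_ext_loc (fun _ => c));
    [|exact (is_derive_const (K := R_AbsRing) (V := R_NormedModule) c x)].
  assert (Hm : 0 < Rmin x (1 - x)) by (apply Rmin_pos; lra).
  exists (mkposreal _ Hm); intros y Hy; change (Rabs (y - x) < Rmin x (1 - x)) in Hy.
  pose proof (Rmin_l x (1 - x)); pose proof (Rmin_r x (1 - x)); apply Rabs_def2 in Hy.
  symmetry; apply E; lra.
Qed.

Lemma derivable_pt_lim_open01_const_0 f c x l : 0 < x < 1 -> (forall y, 0 < y < 1 -> f y = c) ->
  derivable_pt_lim f x l -> l = 0.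
Proof.
  intros Ix E H; eapply uniqueness_limite; [exact H | apply (derivable_pt_lim_open01_const _ c); auto].
Qed.

Lemma open01_const_of_derivable_0 f : (forall s, 0 < s < 1 -> derivable_pt_lim f s 0) ->
  forall x y, 0 < x < 1 -> 0 < y < 1 -> f x = f y.
Proof.
  intros H.
  assert (K : forall x y, 0 < x < 1 -> 0 < y < 1 -> x < y -> f x = f y).
  { intros x y Hx Hy Hxy; destruct (MVT_cor2 f (fun _ => 0) x y Hxy) as [c [Hc _]];
      [intros c Hc; apply H; lra | lra]. }
  intros x y Hx Hy; destruct (Rtotal_order x y) as [L|[->|L]]; auto.
  symmetry; auto.
Qed.

Lemma filterlim_inner01_open01_const x (f : R -> R) v l : I01 x ->
  (forall y, 0 < y < 1 -> f y = v) -> filterlim f (inner01 x) (locally l) -> l = v.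
Proof.
  intros Ix E H; apply (filterlim_inner01_unique x f _ _ Ix H).
  apply (filterlim_within_ext _ (fun _ => v)); [intros y [_ Hy]; symmetry; auto|].
  apply filterlim_const.
Qed.

Lemma cont01_open01_const f x v : I01 x -> cont01 f x -> (forall y, 0 < y < 1 -> f y = v) -> f x = v.
Proof.
  intros Ix C E; apply (filterlim_inner01_open01_const x f); auto; apply cont01_inner01, C.
Qed.

Lemma cont01_const c x : cont01 (fun _ => c) x.
Proof. apply cont01_filterlim, filterlim_const. Qed.

Lemma cont01_plus f g x : cont01 f x -> cont01 g x -> cont01 (fun y => f y + g y) x.
Proof. rewrite !cont01_filterlim; apply filterlim_Rplus. Qed.

Lemma cont01_opp f x : cont01 f x -> cont01 (fun y => - f y) x.
Proof. rewrite !cont01_filterlim; apply filterlim_Ropp. Qed.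

Lemma cont01_minus f g x : cont01 f x -> cont01 g x -> cont01 (fun y => f y - g y) x.
Proof. intros; apply cont01_plus, cont01_opp; auto. Qed.

Lemma cont01_mult f g x : cont01 f x -> cont01 g x -> cont01 (fun y => f y * g y) x.
Proof. rewrite !cont01_filterlim; apply filterlim_Rmult. Qed.

Lemma cont01_comp f g x : cont01 f x -> continuity_pt g (f x) -> cont01 (fun y => g (f y)) x.
Proof. rewrite !cont01_filterlim; apply filterlim_continuity_pt. Qed.

Lemma cont01_ext f g x : I01 x -> (forall y, I01 y -> f y = g y) -> cont01 f x -> cont01 g x.
Proof.
  rewrite !cont01_filterlim; intros Ix E; rewrite <- (E x Ix); apply filterlim_within_ext; auto.
Qed.

Lemma cont01_eq f g x : I01 x -> (forall y, 0 < y < 1 -> f y = g y) ->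
  cont01 f x -> cont01 g x -> f x = g x.
Proof.
  intros Ix E Cf Cg.
  enough (f x - g x = 0) by lra.
  apply (cont01_open01_const (fun y => f y - g y)); auto; [apply cont01_minus; auto|].
  intros y Hy; rewrite E; auto; ring.
Qed.

Lemma eq_of_deriv01_eq f g f' g' x : I01 x ->
  (forall y, I01 y -> has_deriv01 f y (f' y)) -> (forall y, I01 y -> has_deriv01 g y (g' y)) ->
  (forall y, 0 < y < 1 -> f' y = g' y) -> f 0 = g 0 -> f x = g x.
Proof.
  intros Ix Df Dg E F0.
  set (h y := f y - g y).
  assert (Dh : forall y, I01 y -> has_deriv01 h y (f' y - g' y))
    by (intros; apply has_deriv01_minus; auto).
  assert (Ch : forall y, I01 y -> cont01 h y) by (intros y Iy; eapply has_deriv01_cont, Dh, Iy).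
  assert (Hc : forall y, 0 < y < 1 -> h y = h (1 / 2)).
  { intros y Hy; apply open01_const_of_derivable_0; try lra.
    intros s Hs; replace 0 with (f' s - g' s) by (rewrite E; auto; ring).
    apply has_deriv01_derivable, Dh; auto; unfold I01; lra. }
  assert (I0 : I01 0) by (unfold I01; lra).
  pose proof (cont01_open01_const h 0 _ I0 (Ch 0 I0) Hc).
  pose proof (cont01_open01_const h x _ Ix (Ch x Ix) Hc).
  unfold h in *; lra.
Qed.

(** * Functions of class C^k on [0,1] *)

Fixpoint C01 (k : nat) (f : R -> R) : Prop :=
  match k with
  | O => forall x, I01 x -> cont01 f x
  | S k => exists f', (forall x, I01 x -> has_deriv01 f x (f' x)) /\ C01 k f'
  end.

Lemma C01_ext k : forall f g, (forall y, I01 y -> f y = g y) -> C01 k f -> C01 k g.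
Proof.
  induction k; simpl; intros f g E H.
  - intros x Ix; apply (cont01_ext f); auto.
  - destruct H as [f' [D C]]; exists f'; split; auto.
    intros x Ix; apply (has_deriv01_ext f); auto.
Qed.

Lemma Ck_iff_C01 k f : Ck k f <-> C01 k f.
Proof.
  split.
  - intros [D [H0 [H1 H2]]].
    assert (G : forall m j, (j + m = k)%nat -> C01 m (D j)).
    { induction m as [|m IH]; intros j E.
      - simpl; replace j with k by lia; auto.
      - exists (D (S j)); split; [intros x Ix; apply H1; auto; lia | apply IH; lia]. }
    apply (C01_ext k (D O)); auto.
  - revert f; induction k as [|k IH]; intros f C.
    + exists (fun _ => f); repeat split; auto; intros j x Hj; lia.
    + destruct C as [f' [Df Cf']]; destruct (IH f' Cf') as [D [H0 [H1 H2]]].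
      exists (fun j => match j with O => f | S j => D j end); repeat split; auto.
      intros [|j] x Hj Ix; [rewrite H0 by exact Ix; auto | apply H1; auto; lia].
Qed.

Lemma C01_cont k f : C01 k f -> forall x, I01 x -> cont01 f x.
Proof.
  destruct k; simpl; intros H x Ix; auto.
  destruct H as [f' [D _]]; eapply has_deriv01_cont; eauto.
Qed.

Lemma C01_pred k f : C01 (S k) f -> C01 k f.
Proof.
  revert f; induction k; intros f H; [exact (C01_cont 1 f H)|].
  destruct H as [f' [D C]]; exists f'; split; auto.
Qed.

Lemma C01_le k m f : (m <= k)%nat -> C01 k f -> C01 m f.
Proof. induction 1; auto; intros; apply IHle, C01_pred; auto. Qed.

Lemma C01_plus k : forall f g, C01 k f -> C01 k g -> C01 k (fun y => f y + g y).
Proof.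
  induction k; simpl; intros f g Hf Hg; [intros; apply cont01_plus; auto|].
  destruct Hf as [f' [Df Cf]], Hg as [g' [Dg Cg]].
  exists (fun y => f' y + g' y); split; auto; intros; apply has_deriv01_plus; auto.
Qed.

Lemma C01_opp k : forall f, C01 k f -> C01 k (fun y => - f y).
Proof.
  induction k; simpl; intros f Hf; [intros; apply cont01_opp; auto|].
  destruct Hf as [f' [Df Cf]].
  exists (fun y => - f' y); split; auto; intros; apply has_deriv01_opp; auto.
Qed.

Lemma C01_mult k : forall f g, C01 k f -> C01 k g -> C01 k (fun y => f y * g y).
Proof.
  induction k; intros f g Hf Hg; [simpl in *; intros; apply cont01_mult; auto|].
  pose proof (C01_pred _ _ Hf); pose proof (C01_pred _ _ Hg).
  destruct Hf as [f' [Df Cf]], Hg as [g' [Dg Cg]].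
  exists (fun y => f' y * g y + f y * g' y); split.
  - intros; apply has_deriv01_mult; auto.
  - apply C01_plus; apply IHk; auto.
Qed.

Lemma derivable_pt_lim_Rinv y : y <> 0 -> derivable_pt_lim Rinv y (- (/ y * / y)).
Proof. intros Ny; apply is_derive_Reals; auto_derive; [exact Ny | field; exact Ny]. Qed.

Lemma C01_inv k : forall g, C01 k g -> (forall x, I01 x -> g x <> 0) -> C01 k (fun y => / g y).
Proof.
  induction k; intros g Hg Ng.
  - simpl in *; intros x Ix; apply cont01_comp; auto.
    apply continuity_pt_inv; [apply continuity_pt_id | exact (Ng x Ix)].
  - pose proof (IHk g (C01_pred _ _ Hg) Ng); destruct Hg as [g' [Dg Cg]].
    exists (fun y => - (/ g y * / g y) * g' y); split.
    + intros; apply has_deriv01_comp; auto; apply derivable_pt_lim_Rinv; auto.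
    + apply C01_mult; auto; apply C01_opp, C01_mult; auto.
Qed.

(** * Integrals *)

(* [Defs.RInt] is defined through [Riemann_integrable]; composing with the projection onto [[0,1]]
   links it to Coquelicot's [RInt] on the whole line. *)
Definition clamp01 (y : R) : R := Rmax 0 (Rmin y 1).

Lemma clamp01_I01 y : I01 (clamp01 y).
Proof. unfold clamp01, I01, Rmax, Rmin; repeat destruct Rle_dec; lra. Qed.

Lemma clamp01_id y : I01 y -> clamp01 y = y.
Proof. unfold clamp01, I01, Rmax, Rmin; intros; repeat destruct Rle_dec; lra. Qed.

Lemma clamp01_lipschitz y z : Rabs (clamp01 z - clamp01 y) <= Rabs (z - y).
Proof.
  unfold clamp01, Rmax, Rmin; repeat destruct Rle_dec; unfold Rabs; repeat destruct Rcase_abs; lra.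
Qed.

Lemma continuous_clamp01 f y : (forall x, I01 x -> cont01 f x) -> continuous (fun z => f (clamp01 z)) y.
Proof.
  intros C; apply continuity_pt_filterlim; intros e He.
  destruct (C (clamp01 y) (clamp01_I01 y) e He) as [d [Hd K]].
  exists d; split; auto; intros z [_ Hz]; simpl in *; unfold R_dist in *.
  apply K; [apply clamp01_I01 | pose proof (clamp01_lipschitz y z); lra].
Qed.

Lemma RInt_clamp01 f y : (forall x, I01 x -> cont01 f x) -> I01 y ->
  Defs.RInt f 0 y = RInt (fun z => f (clamp01 z)) 0 y.
Proof.
  intros C Iy; set (g z := f (clamp01 z)).
  assert (Eg : forall z, Rmin 0 y <= z <= Rmax 0 y -> g z = f z).
  { intros z Hz; unfold g; rewrite clamp01_id; auto.
    unfold I01 in *; unfold Rmin, Rmax in Hz; destruct Rle_dec; lra. }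
  assert (Rf : Riemann_integrable f 0 y).
  { apply Riemann_integrable_ext with g; [exact Eg|].
    apply ex_RInt_Reals_0, (ex_RInt_continuous (V := R_CompleteNormedModule)).
    intros z _; apply continuous_clamp01, C. }
  unfold Defs.RInt; destruct ClassicalEpsilon.excluded_middle_informative as [H|H].
  - destruct ClassicalEpsilon.constructive_indefinite_description as [I [pr Hpr]]; simpl.
    rewrite <- Hpr, <- RInt_Reals; apply RInt_ext; intros x Hx; symmetry; apply Eg; lra.
  - exfalso; apply H; exists (RiemannInt Rf), Rf; reflexivity.
Qed.

Lemma RInt01_0 f : (forall x, I01 x -> cont01 f x) -> Defs.RInt f 0 0 = 0.
Proof. intros C; rewrite RInt_clamp01, RInt_point; auto; unfold I01; lra. Qed.

Lemma has_deriv01_RInt01 f x : (forall x, I01 x -> cont01 f x) -> I01 x ->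
  has_deriv01 (fun y => Defs.RInt f 0 y) x (f x).
Proof.
  intros C Ix; set (g z := f (clamp01 z)).
  apply (has_deriv01_ext (fun b => RInt g 0 b)); auto.
  { intros y Iy; symmetry; apply RInt_clamp01; auto. }
  replace (f x) with (g x) by (unfold g; rewrite clamp01_id; auto).
  apply derivable_has_deriv01, is_derive_Reals, (is_derive_RInt g _ 0 x);
    [|apply continuous_clamp01, C].
  apply filter_forall; intro b; apply (RInt_correct (V := R_CompleteNormedModule)).
  apply (ex_RInt_continuous (V := R_CompleteNormedModule)).
  intros z _; apply continuous_clamp01, C.
Qed.

Lemma sq_kbar_le e m o uu : 0 < e -> 0 <= m -> 0 < o -> -1 <= uu <= 1 ->
  (m * o / (m + e) * uu) ^ 2 <= o ^ 2.
Proof.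
  intros He Hm Ho Hu.
  replace (m * o / (m + e) * uu) with (m / (m + e) * uu * o) by (field; lra).
  assert (0 <= m / (m + e) <= 1).
  { split; [apply Rmult_le_pos; [lra | left; apply Rinv_0_lt_compat; lra]|].
    apply (Rmult_le_reg_r (m + e)); [lra|].
    unfold Rdiv; rewrite Rmult_assoc, Rinv_l by lra; lra. }
  set (a := m / (m + e)) in *.
  assert (Hau : (a * uu) ^ 2 <= 1).
  { replace ((a * uu) ^ 2) with ((a * a) * (uu * uu)) by ring.
    replace 1 with (1 * 1) by ring; apply Rmult_le_compat; nra. }
  rewrite Rpow_mult_distr; pose proof (pow2_ge_0 o); nra.
Qed.

(* The components of [A] and [B] in [is_solution] once [q_s = (st, - ct)] and [q_ss = k (ct, st)]. *)
Lemma explicit_residuals e n m o uu st ct : 0 < e -> 0 <= m -> 0 < o -> -1 <= uu <= 1 ->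
  st ^ 2 + ct ^ 2 = 1 ->
  let k := m * o / (m + e) * uu in
  let G := e + n * Rmax ((ct * k) ^ 2 + (st * k) ^ 2 - o ^ 2) 0 in
  let H := m * (o * uu - (st * (st * k) - - ct * (ct * k))) in
  e * k ^ 2 * st - H * (st * k) = 0 /\ e * k ^ 2 * - ct + H * (ct * k) = 0 /\
  G * (ct * k) + H * - ct = 0 /\ G * (st * k) - H * st = 0.
Proof.
  intros He Hm Ho Hu Hsc k G H.
  assert (EG : G = e).
  { unfold G; rewrite Rmax_right; [ring|].
    pose proof (sq_kbar_le e m o uu He Hm Ho Hu) as Hk; fold k in Hk.
    replace ((ct * k) ^ 2 + (st * k) ^ 2) with (k ^ 2 * (st ^ 2 + ct ^ 2)) by ring; rewrite Hsc; lra. }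
  assert (EH : H = e * k).
  { unfold H; replace (st * (st * k) - - ct * (ct * k)) with (k * (st ^ 2 + ct ^ 2)) by ring.
    rewrite Hsc; unfold k; field; lra. }
  rewrite EG, EH; repeat split; ring.
Qed.

Lemma unit_tangent_frenet a b c d : a ^ 2 + b ^ 2 = 1 -> a * c + b * d = 0 ->
  c = - (a * d - b * c) * b /\ d = (a * d - b * c) * a.
Proof.
  intros Hu Ho; split.
  - transitivity (c * (a ^ 2 + b ^ 2) - a * (a * c + b * d)); [rewrite Hu, Ho|]; ring.
  - transitivity (d * (a ^ 2 + b ^ 2) - b * (a * c + b * d)); [rewrite Hu, Ho|]; ring.
Qed.

(* If [|k| > o], the left side exceeds [(m + e) o >= |(m + e) kbar|] in modulus;
   otherwise the equation is linear in [k]. *)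
Lemma curvature_fixed_point e n m o uu k : 0 < e -> 0 <= m -> 0 < o -> 0 <= n -> -1 <= uu <= 1 ->
  (e + n * Rmax (k ^ 2 - o ^ 2) 0) * k = m * (o * uu - k) -> k = m * o / (m + e) * uu.
Proof.
  intros He Hm Ho Hn Hu Eq.
  pose proof (sq_kbar_le e m o uu He Hm Ho Hu) as Hw.
  set (w := m * o / (m + e) * uu) in *.
  assert (Ew : (m + e) * w = m * o * uu) by (unfold w; field; lra).
  assert (- o <= w <= o) by (split; nra).
  destruct (Rle_dec (k ^ 2 - o ^ 2) 0) as [Le|Gt].
  - rewrite Rmax_right in Eq by lra.
    apply Rmult_eq_reg_l with (m + e); [nra | lra].
  - rewrite Rmax_left in Eq by lra; exfalso.
    assert (0 <= n * (k ^ 2 - o ^ 2)) by (apply Rmult_le_pos; lra).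
    assert ((e + m + n * (k ^ 2 - o ^ 2)) * k = (m + e) * w) by (rewrite Ew; nra).
    destruct (Rle_dec k 0); [assert (k < - o) by nra | assert (k > o) by nra]; nra.
Qed.

Lemma continuity_pt_Rmax_0 x : continuity_pt (fun y => Rmax y 0) x.
Proof.
  intros e He; exists e; split; auto; intros z [_ Hz]; simpl in *; unfold R_dist in *.
  eapply Rle_lt_trans; [|exact Hz].
  unfold Rmax; repeat destruct Rle_dec; unfold Rabs; repeat destruct Rcase_abs; lra.
Qed.

Lemma deriv_chain_RInt_rotation (phi psi th w w1 w2 : R -> R) :
  (forall z, derivable_pt_lim phi z (psi z)) -> (forall z, derivable_pt_lim psi z (- phi z)) ->
  (forall x, I01 x -> has_deriv01 th x (w x)) ->
  (forall x, I01 x -> has_deriv01 w x (w1 x)) ->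
  (forall x, I01 x -> has_deriv01 w1 x (w2 x)) ->
  (forall x, I01 x -> cont01 w2 x) ->
  deriv_chain 4 (fun s => Defs.RInt (fun xi => phi (th xi)) 0 s)
    (fun j => match j with
     | O => fun s => Defs.RInt (fun xi => phi (th xi)) 0 s
     | 1%nat => fun s => phi (th s)
     | 2%nat => fun s => psi (th s) * w s
     | 3%nat => fun s => - phi (th s) * w s * w s + psi (th s) * w1 s
     | _ => fun s => - psi (th s) * w s ^ 3 - 3 * phi (th s) * w s * w1 s + psi (th s) * w2 s
     end).
Proof.
  intros Dphi Dpsi Dth Dw Dw1 Cw2.
  assert (Cphi : forall z, continuity_pt phi z)
    by (intros z; apply derivable_continuous_pt; exists (psi z); apply Dphi).
  assert (Cpsi : forall z, continuity_pt psi z)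
    by (intros z; apply derivable_continuous_pt; exists (- phi z); apply Dpsi).
  assert (Cth : forall x, I01 x -> cont01 th x) by (intros; eapply has_deriv01_cont; eauto).
  assert (Cw : forall x, I01 x -> cont01 w x) by (intros; eapply has_deriv01_cont; eauto).
  assert (Cw1 : forall x, I01 x -> cont01 w1 x) by (intros; eapply has_deriv01_cont; eauto).
  assert (Dphith : forall x, I01 x -> has_deriv01 (fun y => phi (th y)) x (psi (th x) * w x))
    by (intros; apply has_deriv01_comp; auto).
  assert (Dpsith : forall x, I01 x -> has_deriv01 (fun y => psi (th y)) x (- phi (th x) * w x))
    by (intros; apply has_deriv01_comp; auto).
  split; [intros; reflexivity|]; split.
  - intros j x Hj Ix; destruct j as [|[|[|[|j]]]]; try lia.
    + apply (has_deriv01_RInt01 (fun xi => phi (th xi))); auto.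
      intros y Iy; apply cont01_comp; auto.
    + apply Dphith; auto.
    + apply (has_deriv01_mult (fun y => psi (th y)) w); auto.
    + eapply has_deriv01_eq;
        [|apply (has_deriv01_plus (fun y => - phi (th y) * w y * w y) (fun y => psi (th y) * w1 y));
          [apply (has_deriv01_mult (fun y => - phi (th y) * w y) w);
             [apply (has_deriv01_mult (fun y => - phi (th y)) w); [apply has_deriv01_opp|]|]
          |apply (has_deriv01_mult (fun y => psi (th y)) w1)]]; eauto.
      simpl; ring.
  - intros x Ix.
    assert (cont01 (fun y => phi (th y)) x) by (apply cont01_comp; auto).
    assert (cont01 (fun y => psi (th y)) x) by (apply cont01_comp; auto).
    repeat first [apply cont01_plus | apply cont01_minus | apply cont01_mult | apply cont01_opp
                 | apply cont01_const]; auto.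
Qed.

(* By the mean value theorem on [[1 - d/2, 1 - d/4]], [dB] takes the value
   [2 q(1 - d/2) - q(1 - d/4)], where [q y = B y / (y - 1)]. *)
Lemma flat_end_deriv_lim (B dB : R -> R) L :
  (forall s, 0 < s < 1 -> derivable_pt_lim B s (dB s)) ->
  filterlim (fun y => B y / (y - 1)) (inner01 1) (locally 0) ->
  filterlim dB (inner01 1) (locally L) -> L = 0.
Proof.
  unfold inner01; rewrite !filterlim_within_R_iff; intros DB LB LdB.
  apply Rabs_eq_0, Rle_antisym; [|apply Rabs_pos].
  apply Rnot_lt_le; intros HL; set (e := Rabs L / 4).
  destruct (LB e ltac:(unfold e; lra)) as [d1 [D1 K1]], (LdB e ltac:(unfold e; lra)) as [d2 [D2 K2]].
  set (d := Rmin (Rmin d1 d2) 1).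
  assert (d <= d1 /\ d <= d2 /\ d <= 1 /\ 0 < d) as [? [? [? ?]]].
  { unfold d; pose proof (Rmin_l (Rmin d1 d2) 1); pose proof (Rmin_r (Rmin d1 d2) 1).
    pose proof (Rmin_l d1 d2); pose proof (Rmin_r d1 d2); pose proof (Rmin_pos d1 d2 D1 D2).
    repeat split; try lra; apply Rmin_pos; lra. }
  set (y := 1 - d / 2); set (m := 1 - d / 4).
  destruct (MVT_cor2 B dB y m) as [xi [Hm Hxi]];
    [unfold y, m; lra | intros c Hc; apply DB; unfold y, m in *; lra|].
  assert (Ky := K1 y ltac:(unfold y; lra) ltac:(rewrite Rabs_left; unfold y; lra)).
  assert (Km := K1 m ltac:(unfold m; lra) ltac:(rewrite Rabs_left; unfold m; lra)).
  assert (Kxi := K2 xi ltac:(unfold y, m in *; lra) ltac:(rewrite Rabs_left; unfold y, m in *; lra)).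
  rewrite Rminus_0_r in Ky, Km.
  assert (E : dB xi = 2 * (B y / (y - 1)) - B m / (m - 1)).
  { apply (Rmult_eq_reg_r (m - y)); [rewrite <- Hm; unfold y, m; field; lra | unfold y, m; lra]. }
  rewrite E in Kxi.
  pose proof (Rabs_triang_inv L (2 * (B y / (y - 1)) - B m / (m - 1))).
  pose proof (Rabs_triang (2 * (B y / (y - 1))) (- (B m / (m - 1)))).
  rewrite Rabs_Ropp, Rabs_mult, (Rabs_pos_eq 2) in * by lra.
  rewrite Rabs_minus_sym in Kxi; unfold Rminus in *; unfold e in *; lra.
Qed.

Lemma balance_flat_end (A B dA dB ddB : R -> R) :
  (forall s, 0 < s < 1 -> derivable_pt_lim A s (dA s) /\ derivable_pt_lim B s (dB s) /\
                          derivable_pt_lim dB s (ddB s) /\ dA s - ddB s = 0) ->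
  filterlim A (inner01 1) (locally 0) ->
  filterlim (fun y => B y / (y - 1)) (inner01 1) (locally 0) ->
  forall s, 0 < s < 1 -> dB s = A s.
Proof.
  intros Hbal LA LB.
  set (c := A (1 / 2) - dB (1 / 2)).
  assert (Hc : forall y, 0 < y < 1 -> A y - dB y = c).
  { intros y Hy; apply (open01_const_of_derivable_0 (fun y => A y - dB y)); try lra.
    intros s Hs; destruct (Hbal s Hs) as [DA [_ [DdB E]]].
    rewrite <- E; apply derivable_pt_lim_minus; auto. }
  assert (c = 0).
  { enough (- c = 0) by lra.
    apply (flat_end_deriv_lim B dB); [intros s Hs; apply Hbal, Hs | exact LB |].
    apply (filterlim_within_ext _ (fun y => A y + - c)).
    - intros y [_ Hy]; rewrite <- (Hc y Hy); ring.
    - replace (locally (- c)) with (locally (0 + - c)) by (f_equal; ring).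
      apply filterlim_Rplus; [exact LA | apply filterlim_const]. }
  intros s Hs; pose proof (Hc s Hs); lra.
Qed.

Lemma unit_rotation_angle (a b th da db dth : R -> R) :
  (forall x, I01 x -> has_deriv01 a x (da x)) -> (forall x, I01 x -> has_deriv01 b x (db x)) ->
  (forall x, I01 x -> has_deriv01 th x (dth x)) ->
  (forall s, 0 < s < 1 -> da s = - dth s * b s /\ db s = dth s * a s) ->
  (forall s, 0 < s < 1 -> a s ^ 2 + b s ^ 2 = 1) ->
  a 0 = sin (th 0) -> b 0 = - cos (th 0) ->
  forall s, 0 < s < 1 -> a s = sin (th s) /\ b s = - cos (th s).
Proof.
  intros Da Db Dth Hrot Hunit a0 b0.
  set (c y := a y * sin (th y) - b y * cos (th y)).
  assert (Dc : forall y, I01 y -> has_deriv01 c y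
    ((da y * sin (th y) + a y * (cos (th y) * dth y))
     - (db y * cos (th y) + b y * (- sin (th y) * dth y)))).
  { intros y Iy; apply has_deriv01_minus.
    - apply (has_deriv01_mult a (fun z => sin (th z))); auto.
      apply (has_deriv01_comp th sin); auto; apply derivable_pt_lim_sin.
    - apply (has_deriv01_mult b (fun z => cos (th z))); auto.
      apply (has_deriv01_comp th cos); auto; apply derivable_pt_lim_cos. }
  assert (c_const : forall y, 0 < y < 1 -> c y = c (1 / 2)).
  { intros y Hy; apply open01_const_of_derivable_0; try lra.
    intros s Hs; destruct (Hrot s Hs) as [Ea Eb].
    apply has_deriv01_derivable; [exact Hs|].
    eapply has_deriv01_eq; [|apply Dc; unfold I01; lra].
    rewrite Ea, Eb; ring. }
  assert (c_0 : c 0 = 1).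
  { unfold c; rewrite a0, b0; pose proof (sin2_cos2 (th 0)); unfold Rsqr in *; lra. }
  assert (I0 : I01 0) by (unfold I01; lra).
  pose proof (cont01_open01_const c 0 _ I0 (has_deriv01_cont _ _ _ (Dc 0 I0)) c_const) as c_half.
  intros s Hs.
  assert (Hsq : (a s - sin (th s)) ^ 2 + (b s + cos (th s)) ^ 2 = 0).
  { transitivity (a s ^ 2 + b s ^ 2 + (sin (th s) * sin (th s) + cos (th s) * cos (th s)) - 2 * c s);
      [unfold c; ring|].
    rewrite Hunit, (c_const s Hs), <- c_half, c_0 by exact Hs.
    pose proof (sin2_cos2 (th s)); unfold Rsqr in *; lra. }
  pose proof (pow2_ge_0 (a s - sin (th s))); pose proof (pow2_ge_0 (b s + cos (th s))).
  split; nra.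
Qed.

(** * The explicit solution and uniqueness *)

Section Rod.

Variables eps nu omega mu u : R -> R.
Hypotheses (Ceps : C01 2 eps) (Cnu : C01 0 nu) (Comega : C01 2 omega) (Cmu : C01 2 mu) (Cu : C01 2 u).
Hypotheses (eps_pos : forall s, I01 s -> 0 < eps s) (nu_nonneg : forall s, I01 s -> 0 <= nu s)
  (omega_pos : forall s, I01 s -> 0 < omega s) (mu_nonneg : forall s, I01 s -> 0 <= mu s).
Hypotheses (mu_1 : mu 1 = 0) (Dmu_1 : has_deriv01 mu 1 0).
Hypothesis u_bound : forall s, I01 s -> -1 <= u s <= 1.

Let I01_1 : I01 1. Proof. unfold I01; lra. Qed.
Let I01_open s : 0 < s < 1 -> I01 s. Proof. unfold I01; lra. Qed.

(* [kbar = wbar * u] is the curvature of the explicit solution and [theta] its tangent angle. *)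
Definition kbar (s : R) : R := mu s * omega s / (mu s + eps s) * u s.
Definition theta (s : R) : R := Defs.RInt kbar 0 s.

Let C01_kbar_div_mu (k : nat) : (k <= 2)%nat -> C01 k (fun s => omega s * / (mu s + eps s) * u s).
Proof.
  intros Hk; apply C01_mult; [apply C01_mult|]; try (apply (C01_le 2); auto).
  apply C01_inv; [apply C01_plus; apply (C01_le 2); auto|].
  intros x Ix; pose proof (eps_pos x Ix); pose proof (mu_nonneg x Ix); lra.
Qed.

Lemma kbar_C2 : C01 2 kbar.
Proof.
  apply (C01_ext 2 (fun s => mu s * (omega s * / (mu s + eps s) * u s))).
  - intros; unfold kbar, Rdiv; ring.
  - apply C01_mult; auto.
Qed.

Lemma kbar_1 : kbar 1 = 0.
Proof. unfold kbar; rewrite mu_1; unfold Rdiv; ring. Qed.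

Lemma has_deriv01_kbar_1 : has_deriv01 kbar 1 0.
Proof.
  destruct (C01_kbar_div_mu 1 ltac:(lia)) as [g' [Dg _]].
  apply (has_deriv01_ext (fun s => mu s * (omega s * / (mu s + eps s) * u s))); auto.
  { intros; unfold kbar, Rdiv; ring. }
  eapply has_deriv01_eq; [|apply has_deriv01_mult; [exact Dmu_1 | apply Dg, I01_1]].
  rewrite mu_1; ring.
Qed.

Lemma has_deriv01_theta x : I01 x -> has_deriv01 theta x (kbar x).
Proof. apply has_deriv01_RInt01, (C01_cont 2), kbar_C2. Qed.

Lemma theta_0 : theta 0 = 0.
Proof. apply RInt01_0, (C01_cont 2), kbar_C2. Qed.

Lemma theta_cont x : I01 x -> cont01 theta x.
Proof. intros Ix; eapply has_deriv01_cont, has_deriv01_theta, Ix. Qed.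

Lemma cont01_sin_theta x : I01 x -> cont01 (fun y => sin (theta y)) x.
Proof. intros Ix; apply cont01_comp; [apply theta_cont, Ix | apply continuity_sin]. Qed.

Lemma cont01_cos_theta x : I01 x -> cont01 (fun y => - cos (theta y)) x.
Proof. intros Ix; apply cont01_opp, cont01_comp; [apply theta_cont, Ix | apply continuity_cos]. Qed.

Lemma explicit_is_solution :
  is_solution eps nu omega mu u
    (fun s => Defs.RInt (fun xi => sin (theta xi)) 0 s)
    (fun s => Defs.RInt (fun xi => - cos (theta xi)) 0 s)
    (fun s => eps s * kbar s ^ 2).
Proof.
  destruct kbar_C2 as [k1 [Dk [k2 [Dk1 Ck2]]]].
  assert (k1_1 : k1 1 = 0) by exact (has_deriv01_unique _ _ _ _ I01_1 (Dk 1 I01_1) has_deriv01_kbar_1).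
  eexists; eexists; split; [|split].
  { apply (deriv_chain_RInt_rotation sin cos theta kbar k1 k2); auto;
      [apply derivable_pt_lim_sin | apply derivable_pt_lim_cos | apply has_deriv01_theta]. }
  { apply (deriv_chain_RInt_rotation (fun x => - cos x) sin theta kbar k1 k2); auto;
      [ | intros z; rewrite Ropp_involutive; apply derivable_pt_lim_sin | apply has_deriv01_theta].
    intros z; rewrite <- (Ropp_involutive (sin z)); apply derivable_pt_lim_opp, derivable_pt_lim_cos. }
  split.
  { apply Ck_iff_C01, C01_mult; [apply (C01_le 2); auto | apply (C01_le 2); [lia|]].
    apply (C01_ext 2 (fun s => kbar s * kbar s)); [intros; simpl; ring|].
    apply C01_mult; apply kbar_C2. }
  cbn beta iota; rewrite theta_0, kbar_1, k1_1, sin_0, cos_0.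
  repeat split; try ring.
  - intros s _; pose proof (sin2_cos2 (theta s)); unfold Rsqr in *; nra.
  - apply RInt01_0, cont01_sin_theta.
  - apply RInt01_0, cont01_cos_theta.
  - intros G H A1 A2 B1 B2.
    exists (fun _ => 0), (fun _ => 0), (fun _ => 0), (fun _ => 0), (fun _ => 0), (fun _ => 0).
    assert (Res : forall y, 0 < y < 1 -> A1 y = 0 /\ A2 y = 0 /\ B1 y = 0 /\ B2 y = 0).
    { intros y Hy.
      refine (explicit_residuals (eps y) (nu y) (mu y) (omega y) (u y) (sin (theta y)) (cos (theta y))
                _ _ _ (u_bound y _) _); auto.
      rewrite <- (sin2_cos2 (theta y)); unfold Rsqr; ring. }
    intros s Hs; repeat split; try apply derivable_pt_lim_const; try ring;
      apply (derivable_pt_lim_open01_const _ 0); auto; intros y Hy; apply (Res y Hy).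
Qed.

Variable tau : R -> R.
Variables D E : nat -> R -> R.
Hypothesis HD : forall j x, (j < 4)%nat -> I01 x -> has_deriv01 (D j) x (D (S j) x).
Hypothesis HE : forall j x, (j < 4)%nat -> I01 x -> has_deriv01 (E j) x (E (S j) x).
Hypothesis Ctau : C01 0 tau.
Hypothesis unit_tangent : forall s, 0 < s < 1 -> D 1%nat s ^ 2 + E 1%nat s ^ 2 = 1.
Hypotheses (D0_0 : D O 0 = 0) (E0_0 : E O 0 = 0) (D1_0 : D 1%nat 0 = 0) (E1_0 : E 1%nat 0 = -1).
Hypotheses (D2_1 : D 2%nat 1 = 0) (E2_1 : E 2%nat 1 = 0) (D3_1 : D 3%nat 1 = 0) (E3_1 : E 3%nat 1 = 0)
  (tau_1 : tau 1 = 0).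

(* [force] and [moment] are the components of [A = sigma q_s - H q_ss^perp] and
   [B = G q_ss + H q_s^perp], so that the equation reads [(A - B_s)_s = 0]. *)
Definition curvature s := D 1%nat s * E 2%nat s - E 1%nat s * D 2%nat s.
Definition stiffness s := eps s + nu s * Rmax (D 2%nat s ^ 2 + E 2%nat s ^ 2 - omega s ^ 2) 0.
Definition torque s := mu s * (omega s * u s - curvature s).
Definition force1 s := tau s * D 1%nat s - torque s * E 2%nat s.
Definition force2 s := tau s * E 1%nat s + torque s * D 2%nat s.
Definition moment1 s := stiffness s * D 2%nat s + torque s * E 1%nat s.
Definition moment2 s := stiffness s * E 2%nat s - torque s * D 1%nat s.

Variables dforce1 dforce2 dmoment1 dmoment2 ddmoment1 ddmoment2 : R -> R.
Hypothesis balance_eq : forall s, 0 < s < 1 ->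
  derivable_pt_lim force1 s (dforce1 s) /\ derivable_pt_lim force2 s (dforce2 s) /\
  derivable_pt_lim moment1 s (dmoment1 s) /\ derivable_pt_lim moment2 s (dmoment2 s) /\
  derivable_pt_lim dmoment1 s (ddmoment1 s) /\ derivable_pt_lim dmoment2 s (ddmoment2 s) /\
  dforce1 s - ddmoment1 s = 0 /\ dforce2 s - ddmoment2 s = 0.

Let cont_D j : (j < 4)%nat -> cont01 (D j) 1.
Proof. intros; eapply has_deriv01_cont, HD; auto. Qed.
Let cont_E j : (j < 4)%nat -> cont01 (E j) 1.
Proof. intros; eapply has_deriv01_cont, HE; auto. Qed.
Let Ceps1 : cont01 eps 1. Proof. exact (C01_cont 2 eps Ceps 1 I01_1). Qed.
Let Cnu1 : cont01 nu 1. Proof. exact (C01_cont 0 nu Cnu 1 I01_1). Qed.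
Let Comega1 : cont01 omega 1. Proof. exact (C01_cont 2 omega Comega 1 I01_1). Qed.
Let Cmu1 : cont01 mu 1. Proof. exact (C01_cont 2 mu Cmu 1 I01_1). Qed.
Let Cu1 : cont01 u 1. Proof. exact (C01_cont 2 u Cu 1 I01_1). Qed.
Let Ctau1 : cont01 tau 1. Proof. exact (Ctau 1 I01_1). Qed.

Lemma tangent_orth s : 0 < s < 1 -> D 1%nat s * D 2%nat s + E 1%nat s * E 2%nat s = 0.
Proof.
  intros Hs.
  pose proof (HD 1 s ltac:(lia) (I01_open s Hs)) as DD1.
  pose proof (HE 1 s ltac:(lia) (I01_open s Hs)) as DE1.
  pose proof (has_deriv01_plus _ _ s _ _ (has_deriv01_mult _ _ s _ _ DD1 DD1)
                (has_deriv01_mult _ _ s _ _ DE1 DE1)) as Hd.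
  apply has_deriv01_derivable, (derivable_pt_lim_open01_const_0 _ 1) in Hd; auto; [lra|].
  intros y Hy; rewrite <- (unit_tangent y Hy); ring.
Qed.

Lemma cont01_stiffness_1 : cont01 stiffness 1.
Proof.
  unfold stiffness; apply cont01_plus, cont01_mult; auto.
  apply (cont01_comp _ (fun z => Rmax z 0)); [|apply continuity_pt_Rmax_0].
  apply cont01_minus; [apply cont01_plus|]; apply cont01_mult; auto;
    try (apply cont01_mult; [|apply cont01_const]); auto.
Qed.

Lemma cont01_torque_1 : cont01 torque 1.
Proof.
  unfold torque, curvature; apply cont01_mult, cont01_minus; auto; [apply cont01_mult; auto|].
  apply cont01_minus; apply cont01_mult; auto.
Qed.

Lemma torque_1 : torque 1 = 0.
Proof. unfold torque; rewrite mu_1; ring. Qed.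

Lemma moment_quotient_lim (K L : R -> R) : K 1 = 0 -> has_deriv01 K 1 0 -> cont01 L 1 ->
  filterlim (fun y => (stiffness y * K y + torque y * L y) / (y - 1)) (inner01 1) (locally 0).
Proof.
  intros K_1 DK CL.
  set (X y := (omega y * u y - curvature y) * L y).
  apply (filterlim_within_ext _
           (fun y => stiffness y * ((K y - K 1) / (y - 1)) + (mu y - mu 1) / (y - 1) * X y)).
  { intros y [Ny _]; unfold X, torque; rewrite K_1, mu_1; field; lra. }
  replace (locally 0) with (locally (stiffness 1 * 0 + 0 * X 1)) by (f_equal; ring).
  apply filterlim_Rplus; apply filterlim_Rmult; try apply has_deriv01_inner01; auto;
    apply cont01_inner01; [apply cont01_stiffness_1|].
  unfold X, curvature; apply cont01_mult, CL; apply cont01_minus; [apply cont01_mult; auto|].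
  apply cont01_minus; apply cont01_mult; auto.
Qed.

Lemma force1_lim : filterlim force1 (inner01 1) (locally 0).
Proof.
  replace 0 with (force1 1) by (unfold force1; rewrite tau_1, torque_1; ring).
  apply cont01_inner01; unfold force1; apply cont01_minus; apply cont01_mult; auto;
    apply cont01_torque_1.
Qed.

Lemma force2_lim : filterlim force2 (inner01 1) (locally 0).
Proof.
  replace 0 with (force2 1) by (unfold force2; rewrite tau_1, torque_1; ring).
  apply cont01_inner01; unfold force2; apply cont01_plus; apply cont01_mult; auto;
    apply cont01_torque_1.
Qed.

Lemma dmoment1_eq_force1 s : 0 < s < 1 -> dmoment1 s = force1 s.
Proof.
  apply (balance_flat_end force1 moment1 dforce1 dmoment1 ddmoment1); [|apply force1_lim|].
  { intros y Hy; destruct (balance_eq y Hy) as [? [_ [? [_ [? [_ [? _]]]]]]]; auto. }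
  apply (moment_quotient_lim (D 2%nat) (E 1%nat)); auto.
  rewrite <- D3_1; apply HD; auto.
Qed.

Lemma dmoment2_eq_force2 s : 0 < s < 1 -> dmoment2 s = force2 s.
Proof.
  apply (balance_flat_end force2 moment2 dforce2 dmoment2 ddmoment2); [|apply force2_lim|].
  { intros y Hy; destruct (balance_eq y Hy) as [_ [? [_ [? [_ [? [_ ?]]]]]]]; auto. }
  apply (filterlim_within_ext _ (fun y => (stiffness y * E 2%nat y + torque y * - D 1%nat y) / (y - 1))).
  { intros y _; unfold moment2; f_equal; ring. }
  apply moment_quotient_lim; auto; [rewrite <- E3_1; apply HE; auto | apply cont01_opp; auto].
Qed.

(* [N = q_s x B] is conserved: its derivative [q_ss x B + q_s x A] vanishes identically once
   [B_s = A]. *)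
Lemma moment_normal_0 s : 0 < s < 1 -> - moment1 s * E 1%nat s + moment2 s * D 1%nat s = 0.
Proof.
  set (N y := - moment1 y * E 1%nat y + moment2 y * D 1%nat y).
  assert (DN : forall s, 0 < s < 1 -> derivable_pt_lim N s 0).
  { intros y Hy.
    destruct (balance_eq y Hy) as [_ [_ [DB1 [DB2 _]]]].
    pose proof (has_deriv01_derivable _ _ _ Hy (HD 1 y ltac:(lia) (I01_open y Hy))) as DD1.
    pose proof (has_deriv01_derivable _ _ _ Hy (HE 1 y ltac:(lia) (I01_open y Hy))) as DE1.
    replace 0 with ((- dmoment1 y * E 1%nat y + - moment1 y * E 2%nat y)
                    + (dmoment2 y * D 1%nat y + moment2 y * D 2%nat y)).
    - exact (derivable_pt_lim_plus _ _ y _ _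
               (derivable_pt_lim_mult _ _ y _ _ (derivable_pt_lim_opp _ y _ DB1) DE1)
               (derivable_pt_lim_mult _ _ y _ _ DB2 DD1)).
    - rewrite dmoment1_eq_force1, dmoment2_eq_force2 by exact Hy.
      unfold force1, force2, moment1, moment2; ring. }
  assert (CN : cont01 N 1).
  { unfold N, moment1, moment2; apply cont01_plus; apply cont01_mult; auto;
      [apply cont01_opp|]; [apply cont01_plus | apply cont01_minus]; apply cont01_mult; auto;
      solve [apply cont01_stiffness_1 | apply cont01_torque_1]. }
  assert (N_1 : N 1 = 0) by (unfold N, moment1, moment2; rewrite torque_1, D2_1, E2_1; ring).
  intros Hs; fold (N s); rewrite <- N_1; symmetry.
  apply (cont01_open01_const N 1 (N s)); auto.
  intros y Hy; apply open01_const_of_derivable_0; auto.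
Qed.

Lemma frenet_eq s : 0 < s < 1 ->
  D 2%nat s = - curvature s * E 1%nat s /\ E 2%nat s = curvature s * D 1%nat s.
Proof. intros Hs; apply unit_tangent_frenet; [apply unit_tangent | apply tangent_orth]; exact Hs. Qed.

Lemma stiffness_curvature_eq_torque s : 0 < s < 1 -> stiffness s * curvature s = torque s.
Proof.
  intros Hs.
  assert (stiffness s * curvature s - torque s * (D 1%nat s ^ 2 + E 1%nat s ^ 2)
          = - moment1 s * E 1%nat s + moment2 s * D 1%nat s)
    by (unfold moment1, moment2, curvature; ring).
  rewrite unit_tangent, moment_normal_0 in * by exact Hs; lra.
Qed.

Lemma moment1_0 s : 0 < s < 1 -> moment1 s = 0.
Proof.
  intros Hs; destruct (frenet_eq s Hs) as [F _].
  unfold moment1; rewrite F, <- (stiffness_curvature_eq_torque s Hs); ring.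
Qed.

Lemma moment2_0 s : 0 < s < 1 -> moment2 s = 0.
Proof.
  intros Hs; destruct (frenet_eq s Hs) as [_ F].
  unfold moment2; rewrite F, <- (stiffness_curvature_eq_torque s Hs); ring.
Qed.

Lemma tau_eq_torque_curvature s : 0 < s < 1 -> tau s = torque s * curvature s.
Proof.
  intros Hs; destruct (balance_eq s Hs) as [_ [_ [DB1 [DB2 _]]]].
  pose proof (derivable_pt_lim_open01_const_0 _ _ _ _ Hs moment1_0 DB1).
  pose proof (derivable_pt_lim_open01_const_0 _ _ _ _ Hs moment2_0 DB2).
  assert (F1_0 : force1 s = 0) by (rewrite <- dmoment1_eq_force1; auto).
  assert (F2_0 : force2 s = 0) by (rewrite <- dmoment2_eq_force2; auto).
  assert (Etau : tau s * (D 1%nat s ^ 2 + E 1%nat s ^ 2)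
                 = force1 s * D 1%nat s + force2 s * E 1%nat s + torque s * curvature s)
    by (unfold force1, force2, curvature; ring).
  rewrite unit_tangent, F1_0, F2_0 in Etau by exact Hs; lra.
Qed.

Lemma curvature_eq_kbar s : 0 < s < 1 -> curvature s = kbar s.
Proof.
  intros Hs; pose proof (I01_open s Hs) as Is.
  apply (curvature_fixed_point (eps s) (nu s) (mu s) (omega s) (u s)); auto.
  assert (Hq : D 2%nat s ^ 2 + E 2%nat s ^ 2 = curvature s ^ 2).
  { destruct (frenet_eq s Hs) as [-> ->].
    rewrite <- (Rmult_1_r (curvature s ^ 2)), <- (unit_tangent s Hs); ring. }
  change (mu s * (omega s * u s - curvature s)) with (torque s).
  rewrite <- stiffness_curvature_eq_torque by exact Hs; unfold stiffness; rewrite Hq; ring.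
Qed.

Lemma tangent_eq_angle s : 0 < s < 1 -> D 1%nat s = sin (theta s) /\ E 1%nat s = - cos (theta s).
Proof.
  apply (unit_rotation_angle (D 1%nat) (E 1%nat) theta (D 2%nat) (E 2%nat) kbar).
  - intros x Ix; apply HD; [lia | exact Ix].
  - intros x Ix; apply HE; [lia | exact Ix].
  - apply has_deriv01_theta.
  - intros y Hy; rewrite <- curvature_eq_kbar by exact Hy; apply frenet_eq, Hy.
  - exact unit_tangent.
  - rewrite theta_0, sin_0; exact D1_0.
  - rewrite theta_0, cos_0; exact E1_0.
Qed.

Lemma solution_eq_explicit s : I01 s ->
  D O s = Defs.RInt (fun xi => sin (theta xi)) 0 s /\
  E O s = Defs.RInt (fun xi => - cos (theta xi)) 0 s /\
  tau s = eps s * kbar s ^ 2.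
Proof.
  intros Is; split; [|split].
  - apply (eq_of_deriv01_eq _ _ (D 1%nat) (fun y => sin (theta y)) s Is).
    + intros x Ix; apply HD; [lia | exact Ix].
    + intros x Ix; apply (has_deriv01_RInt01 (fun xi => sin (theta xi))); auto.
      apply cont01_sin_theta.
    + intros y Hy; apply tangent_eq_angle, Hy.
    + rewrite D0_0, RInt01_0; auto; apply cont01_sin_theta.
  - apply (eq_of_deriv01_eq _ _ (E 1%nat) (fun y => - cos (theta y)) s Is).
    + intros x Ix; apply HE; [lia | exact Ix].
    + intros x Ix; apply (has_deriv01_RInt01 (fun xi => - cos (theta xi))); auto.
      apply cont01_cos_theta.
    + intros y Hy; apply tangent_eq_angle, Hy.
    + rewrite E0_0, RInt01_0; auto; apply cont01_cos_theta.
  - apply (cont01_eq tau (fun y => eps y * kbar y ^ 2) s Is); [| apply Ctau, Is |].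
    + intros y Hy; pose proof (eps_pos y (I01_open y Hy)); pose proof (mu_nonneg y (I01_open y Hy)).
      rewrite tau_eq_torque_curvature by exact Hy; unfold torque.
      rewrite curvature_eq_kbar by exact Hy; unfold kbar; field; lra.
    + apply cont01_mult; [apply (C01_cont 2); auto|].
      pose proof (C01_cont 2 kbar kbar_C2 s Is).
      apply cont01_mult; auto; apply cont01_mult; auto; apply cont01_const.
Qed.

End Rod.

Import Pilot.Defs.

Theorem proposition1 (rho eps nu omega mu u : R -> R) :
  smooth01 rho -> smooth01 eps -> smooth01 nu -> smooth01 omega -> smooth01 mu ->
  (forall s, 0 <= s <= 1 ->
     0 < rho s /\ 0 < omega s /\ 0 <= nu s /\ 0 <= mu s /\ 0 < eps s) ->
  mu 1 = 0 -> has_deriv01 mu 1 0 ->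
  Ck 2 u -> (forall s, 0 <= s <= 1 -> -1 <= u s <= 1) ->
  let wbar := fun s => mu s * omega s / (mu s + eps s) in
  let theta := fun xi => RInt (fun z => wbar z * u z) 0 xi in
  let q1 := fun s => RInt (fun xi => sin (theta xi)) 0 s in
  let q2 := fun s => RInt (fun xi => - cos (theta xi)) 0 s in
  let sigma := fun s => eps s * (wbar s * u s) ^ 2 in
  is_solution eps nu omega mu u q1 q2 sigma /\
  (forall p1 p2 tau, is_solution eps nu omega mu u p1 p2 tau ->
     forall s, 0 <= s <= 1 -> p1 s = q1 s /\ p2 s = q2 s /\ tau s = sigma s).
Proof.
  intros _ Seps Snu Somega Smu pos mu_1 Dmu_1 Cu u_bound wbar theta q1 q2 sigma.
  assert (C2 : forall f, smooth01 f -> C01 2 f) by (intros f Sf; apply Ck_iff_C01, Sf).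
  apply Ck_iff_C01 in Cu.
  assert (eps_pos : forall s, I01 s -> 0 < eps s) by apply pos.
  assert (nu_nonneg : forall s, I01 s -> 0 <= nu s) by apply pos.
  assert (omega_pos : forall s, I01 s -> 0 < omega s) by apply pos.
  assert (mu_nonneg : forall s, I01 s -> 0 <= mu s) by apply pos.
  split.
  - exact (explicit_is_solution eps nu omega mu u (C2 _ Seps) (C2 _ Somega) (C2 _ Smu) Cu
             eps_pos omega_pos mu_nonneg mu_1 Dmu_1 u_bound).
  - intros p1 p2 tau [D [E [[D0 [HD _]] [[E0 [HE _]] [Ctau [unit [p1_0 [p2_0 [D1_0 [E1_0
      [D2_1 [E2_1 [D3_1 [E3_1 [tau_1 Hbal]]]]]]]]]]]]]]] s Is.
    cbv zeta in Hbal.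
    destruct Hbal as [dforce1 [dforce2 [dmoment1 [dmoment2 [ddmoment1 [ddmoment2 Hbal]]]]]].
    assert (I0 : I01 0) by (unfold I01; lra).
    assert (D0_0 : D O 0 = 0) by (rewrite D0; auto).
    assert (E0_0 : E O 0 = 0) by (rewrite E0; auto).
    assert (Cnu : C01 0 nu) by (apply (C01_le 2); auto).
    apply Ck_iff_C01, (C01_le 1 0) in Ctau; [|lia].
    rewrite <- D0, <- E0 by exact Is.
    apply (solution_eq_explicit eps nu omega mu u) with (tau := tau) (D := D) (E := E)
      (dforce1 := dforce1) (dforce2 := dforce2) (dmoment1 := dmoment1) (dmoment2 := dmoment2)
      (ddmoment1 := ddmoment1) (ddmoment2 := ddmoment2); auto.
Qed.
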